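(* Let $\bar n\ge 1$ be an integer and let $\theta_2>0$ satisfy $\theta_2\neq k\pi/\sqrt{n}$ for all $n\in\{1,\dots,4\bar n+3\}$ and all $k\in\mathbb{N}$. Let $\Phi$ be the Kraus map $\Phi(\rho)=M_g\rho M_g^\dagger+M_e\rho M_e^\dagger+M_m\rho M_m^\dagger$ with $M_g,M_e,M_m$ as defined in the context. Then the finite-dimensional subspace $\mathcal{H}_0^{4\bar n+3}$ is invariant under $M_g,M_e,M_m$, and for every density operator $\rho_0$ (positive semidefinite, unit trace) with support in $\mathcal{H}_0^{4\bar n+3}$, the sequence $\rho_{k+1}=\Phi(\rho_k)$ converges to $|\bar n\rangle\langle\bar n|$. Moreover, $V(\rho)=\mathrm{trace}(f(\mathbf{N})\rho)$, with $f$ defined in the context, is a strict Lyapunov function on density operators supported in $\mathcal{H}_0^{4\bar n+3}$: $V(\Phi(\rho))<V(\rho)$ for every such $\rho\neq|\bar n\rangle\langle\bar n|$.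
   Context: Let $\mathcal{H}$ be the Hilbert space with orthonormal (Fock) basis $\{|n\rangle\}_{n\in\mathbb{N}}$ ($\mathbb{N}$ includes $0$). Let $\mathbf{a}=\sum_{n\ge1}\sqrt{n}\,|n-1\rangle\langle n|$ (annihilation operator), $\mathbf{a}^\dagger$ its adjoint, $\mathbf{N}=\mathbf{a}^\dagger\mathbf{a}=\sum_n n|n\rangle\langle n|$, $\mathbf{I}$ the identity, and for a function $h:\mathbb{N}\to\mathbb{C}$ write $h(\mathbf{N})=\sum_n h(n)|n\rangle\langle n|$. Let $\mathcal{H}_{n_1}^{n_2}=\mathrm{span}\{|n_1\rangle,\dots,|n_2\rangle\}$. Fix $\theta_1=\pi/\sqrt{\bar n+1}$, a parameter $\theta_2>0$ and an arbitrary real phase $\varphi$. Define $M_g=\mathbf{a}^\dagger\,\big(1+\cos\tfrac{\theta_2\sqrt{\mathbf{N}}}{2}\big)\,\frac{\sin(\theta_1\sqrt{\mathbf{N}+\mathbf{I}})}{2\sqrt{\mathbf{N}+\mathbf{I}}}$, $M_e=\cos^2\tfrac{\theta_1\sqrt{\mathbf{N}+\mathbf{I}}}{2}\,\cos\tfrac{\theta_2\sqrt{\mathbf{N}}}{2}-\sin^2\tfrac{\theta_1\sqrt{\mathbf{N}+\mathbf{I}}}{2}$, $M_m=e^{i\varphi}\,\mathbf{a}\,\frac{\sin(\theta_2\sqrt{\mathbf{N}}/2)}{\sqrt{\mathbf{N}}}\,\cos\tfrac{\theta_1\sqrt{\mathbf{N}+\mathbf{I}}}{2}$ (the value of $\sin(\theta_2\sqrt{n}/2)/\sqrt{n}$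 at $n=0$ is irrelevant since it is followed by $\mathbf{a}$). Set $\alpha_n=\pi\sqrt{(n+1)/(\bar n+1)}$ and $\beta_n=\theta_2\sqrt{n}/2$. Fix $\eta\in(0,1)$ and define $f:\mathbb{N}\to\mathbb{R}$ by $f(\bar n)=0$, $f(\bar n+1)=f(\bar n-1)=1$, $f(n-1)=f(n)+\eta\sin^2\tfrac{\alpha_n}{2}\cos^2\tfrac{\beta_n}{2}\,(f(n)-f(n+1))$ for $0<n<\bar n$ (recursively downward), $f(n+1)=f(n)+\eta\sin^2\tfrac{\beta_n}{2}\,(f(n)-f(n-1))$ for $\bar n<n<4\bar n+3$, and $f(n)=f(4\bar n+3)$ for $n>4\bar n+3$. *)

From Stdlib Require Import Reals Lra Lia.
Open Scope R_scope.

Record C := mkC { Re : R ; Im : R }.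
Definition RtoC (x : R) : C := mkC x 0.
Definition C0 : C := RtoC 0.
Definition C1 : C := RtoC 1.
Definition Cadd (z w : C) : C := mkC (Re z + Re w) (Im z + Im w).
Definition Cmul (z w : C) : C :=
  mkC (Re z * Re w - Im z * Im w) (Re z * Im w + Im z * Re w).
Definition Cconj (z : C) : C := mkC (Re z) (- Im z).
Definition Cexpi (phi : R) : C := mkC (cos phi) (sin phi).

Fixpoint Csum (n : nat) (F : nat -> C) : C :=
  match n with
  | O => C0
  | S k => Cadd (Csum k F) (F k)
  end.

(** Operators on the Fock space, given by their matrix elements
    op m n = <m| A |n>. *)
Definition op := nat -> nat -> C.

(** annihilation operator a = sum_{n>=1} sqrt n |n-1><n| *)
Definition ann : op := fun m n =>
  if Nat.eqb n (S m) then RtoC (sqrt (INR n)) else C0.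
(** creation operator a^dagger = sum_n sqrt(n+1) |n+1><n| *)
Definition cre : op := fun m n =>
  if Nat.eqb m (S n) then RtoC (sqrt (INR m)) else C0.
Definition fN (h : nat -> C) : op := fun m n =>
  if Nat.eqb m n then h n else C0.
(** A * h(N)  (right multiplication by a diagonal operator: no infinite sum) *)
Definition mul_fN (A : op) (h : nat -> C) : op := fun m n => Cmul (A m n) (h n).
Definition scale_op (c : C) (A : op) : op := fun m n => Cmul c (A m n).

Definition theta1 (nbar : nat) : R := PI / sqrt (INR nbar + 1).

(** M_g = a^dag (1 + cos(theta2 sqrt N / 2)) sin(theta1 sqrt(N+I)) / (2 sqrt(N+I)) *)
Definition Mg (nbar : nat) (theta2 : R) : op :=
  mul_fN cre (fun n => RtoC
    ((1 + cos (theta2 * sqrt (INR n) / 2))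
     * (sin (theta1 nbar * sqrt (INR n + 1)) / (2 * sqrt (INR n + 1))))).

Definition Me (nbar : nat) (theta2 : R) : op :=
  fN (fun n => RtoC
    (cos (theta1 nbar * sqrt (INR n + 1) / 2) ^ 2 * cos (theta2 * sqrt (INR n) / 2)
     - sin (theta1 nbar * sqrt (INR n + 1) / 2) ^ 2)).

(** M_m = e^{i phi} a sin(theta2 sqrt N / 2)/sqrt N  cos(theta1 sqrt(N+I)/2) *)
Definition Mm (nbar : nat) (theta2 phi : R) : op :=
  scale_op (Cexpi phi)
    (mul_fN ann (fun n => RtoC
       ((sin (theta2 * sqrt (INR n) / 2) / sqrt (INR n))
        * cos (theta1 nbar * sqrt (INR n + 1) / 2)))).

(** Dimension of H_0^{4 nbar + 3}. *)
Definition dimD (nbar : nat) : nat := 4 * nbar + 4.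

(** The subspace H_0^{d-1} = span{|0>,...,|d-1>} is invariant under A. *)
Definition invariant_sub (d : nat) (A : op) : Prop :=
  forall m n, (n < d)%nat -> (d <= m)%nat -> A m n = C0.

Definition supported (d : nat) (rho : op) : Prop :=
  forall i j, (d <= i)%nat \/ (d <= j)%nat -> rho i j = C0.

Definition density (d : nat) (rho : op) : Prop :=
  supported d rho /\
  (forall i j, rho i j = Cconj (rho j i)) /\
  (forall v : nat -> C,
     0 <= Re (Csum d (fun i => Csum d (fun j =>
                 Cmul (Cmul (Cconj (v i)) (rho i j)) (v j))))) /\
  Csum d (fun i => rho i i) = C1.

(** A rho A^dagger, for rho supported in H_0^{d-1} (the sums over k, l < d
    are then exactly the full matrix products). *)
Definition sandwich (d : nat) (A rho : op) : op := fun i j =>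
  Csum d (fun k => Csum d (fun l =>
    Cmul (Cmul (A i k) (rho k l)) (Cconj (A j l)))).

Definition op_add (A B : op) : op := fun i j => Cadd (A i j) (B i j).

Definition Phi (nbar : nat) (theta2 phi : R) (rho : op) : op :=
  let d := dimD nbar in
  op_add (op_add (sandwich d (Mg nbar theta2) rho) (sandwich d (Me nbar theta2) rho))
         (sandwich d (Mm nbar theta2 phi) rho).

Definition proj (nbar : nat) : op := fun i j =>
  if andb (Nat.eqb i nbar) (Nat.eqb j nbar) then C1 else C0.

Definition Vf (d : nat) (f : nat -> R) (rho : op) : R :=
  Re (Csum d (fun n => Cmul (RtoC (f n)) (rho n n))).

Definition alpha (nbar n : nat) : R := PI * sqrt ((INR n + 1) / (INR nbar + 1)).
Definition beta (theta2 : R) (n : nat) : R := theta2 * sqrt (INR n) / 2.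

(** The defining equations of f (they determine f uniquely). *)
Definition f_spec (nbar : nat) (theta2 eta : R) (f : nat -> R) : Prop :=
  f nbar = 0 /\ f (S nbar) = 1 /\ f (Nat.pred nbar) = 1 /\
  (forall n, (0 < n < nbar)%nat ->
     f (Nat.pred n) = f n + eta * sin (alpha nbar n / 2) ^ 2
                               * cos (beta theta2 n / 2) ^ 2 * (f n - f (S n))) /\
  (forall n, (nbar < n < 4 * nbar + 3)%nat ->
     f (S n) = f n + eta * sin (beta theta2 n / 2) ^ 2 * (f n - f (Nat.pred n))) /\
  (forall n, (4 * nbar + 3 < n)%nat -> f n = f (4 * nbar + 3)%nat).

(** Every Kraus operator [Mg], [Me], [Mm] has at most one nonzero entry per
    row, so [Phi] acts on a state [rho] by shifting it along its diagonals
    (lemma [Phi_entry]):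
      Phi(rho)_ij = g_i g_j rho_(i-1)(j-1) + e_i e_j rho_ij + h_i h_j rho_(i+1)(j+1).
    Hence the populations [p_n = rho_nn] evolve as a birth-death chain whose
    rates [rate_up], [rate_stay], [rate_down] sum to one, and
      V(Phi rho) = V(rho) + sum_n p_n * drift n,
    with [drift n = rate_up n (f(n+1) - f n) + rate_down n (f(n-1) - f n)]
    (lemma [Vf_Phi]).  Written with the half angles [alpha_n/2], [beta_n/2],
    the recursion defining [f] makes [f] increase away from [f nbar = 0]
    with [f >= 1] elsewhere, and makes [drift n < 0] for every [n <> nbar];
    the non-resonance hypothesis on [theta2] is what keeps these
    inequalities strict.  Thus [V] is comparable to the leakage
    [leak rho = 1 - p_nbar], decreases by a fixed multiple of it, and so
    decays geometrically along the iterates; so does every entry of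
    [rho_k - |nbar><nbar|], because |rho_ij|^2 <= p_i p_j for any density
    operator. *)

From Pilot Require Import Defs.
From Stdlib Require Import Reals Lra Lia Psatz ZArith FunctionalExtensionality.
Open Scope R_scope.

Lemma Cext (z w : Defs.C) : Re z = Re w -> Im z = Im w -> z = w.
Proof. destruct z, w; simpl; intros; subst; reflexivity. Qed.

Lemma Cmul_0_l z : Cmul C0 z = C0.
Proof. destruct z; apply Cext; simpl; ring. Qed.

Lemma Cmul_0_r z : Cmul z C0 = C0.
Proof. destruct z; apply Cext; simpl; ring. Qed.

Lemma Cconj_0 : Cconj C0 = C0.
Proof. apply Cext; simpl; ring. Qed.

Definition Rscale (r : R) (z : Defs.C) : Defs.C := mkC (r * Re z) (r * Im z).
Definition Cnorm2 (z : Defs.C) : R := Re z ^ 2 + Im z ^ 2.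

Lemma Rscale_0_l z : Rscale 0 z = C0.
Proof. apply Cext; simpl; ring. Qed.

Lemma Rscale_0_r r : Rscale r C0 = C0.
Proof. apply Cext; simpl; ring. Qed.

Fixpoint rsum (n : nat) (g : nat -> R) : R :=
  match n with O => 0 | S k => rsum k g + g k end.

Lemma Re_Csum n F : Re (Csum n F) = rsum n (fun k => Re (F k)).
Proof. induction n as [|n IH]; simpl; [reflexivity | now rewrite IH]. Qed.

Lemma Im_Csum n F : Im (Csum n F) = rsum n (fun k => Im (F k)).
Proof. induction n as [|n IH]; simpl; [reflexivity | now rewrite IH]. Qed.

Lemma rsum_ext n g h :
  (forall k, (k < n)%nat -> g k = h k) -> rsum n g = rsum n h.
Proof.
  induction n as [|n IH]; intros H; simpl; [reflexivity|].
  rewrite IH by (intros; apply H; lia). rewrite H by lia. reflexivity.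
Qed.

Lemma rsum_plus n g h : rsum n (fun k => g k + h k) = rsum n g + rsum n h.
Proof. induction n as [|n IH]; simpl; [ring | rewrite IH; ring]. Qed.

Lemma rsum_scal n c g : rsum n (fun k => c * g k) = c * rsum n g.
Proof. induction n as [|n IH]; simpl; [ring | rewrite IH; ring]. Qed.

Lemma rsum_first m g : rsum (S m) g = g O + rsum m (fun k => g (S k)).
Proof. induction m as [|m IH]; simpl in *; [ring | rewrite IH; ring]. Qed.

Lemma rsum_le n g h :
  (forall k, (k < n)%nat -> g k <= h k) -> rsum n g <= rsum n h.
Proof.
  induction n as [|n IH]; intros H; simpl; [lra|].
  pose proof (IH (fun k Hk => H k ltac:(lia))). pose proof (H n ltac:(lia)). lra.
Qed.

Lemma rsum_zero n g : (forall k, (k < n)%nat -> g k = 0) -> rsum n g = 0.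
Proof.
  induction n as [|n IH]; intros H; simpl; [reflexivity|].
  rewrite IH by (intros; apply H; lia). rewrite H by lia. ring.
Qed.

Lemma rsum_nonneg n g : (forall k, (k < n)%nat -> 0 <= g k) -> 0 <= rsum n g.
Proof.
  intros H. rewrite <- (rsum_zero n (fun _ => 0)) by reflexivity. now apply rsum_le.
Qed.

Lemma rsum_le_term n g s :
  (forall k, (k < n)%nat -> 0 <= g k) -> (s < n)%nat -> g s <= rsum n g.
Proof.
  induction n as [|n IH]; intros H Hs; simpl; [lia|].
  destruct (Nat.eq_dec s n) as [->|Hne].
  - pose proof (rsum_nonneg n g (fun k Hk => H k ltac:(lia))). lra.
  - pose proof (IH (fun k Hk => H k ltac:(lia)) ltac:(lia)).
    pose proof (H n ltac:(lia)). lra.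
Qed.

Lemma rsum_pick n g s :
  (forall k, k <> s -> g k = 0) -> ((n <= s)%nat -> g s = 0) -> rsum n g = g s.
Proof.
  induction n as [|n IH]; intros H1 H2; simpl.
  - symmetry; apply H2; lia.
  - destruct (Nat.eq_dec n s) as [->|Hne].
    + rewrite rsum_zero by (intros; apply H1; lia). ring.
    + rewrite IH by (auto; intros; apply H2; lia). rewrite (H1 n Hne). ring.
Qed.

(** Reindexing [i = n + 1]: a sum whose terms are those of [F] shifted by
    one, with vanishing boundary terms [G 0] and [F m]. *)
Lemma rsum_shift m (G F : nat -> R) :
  G O = 0 -> (forall n, G (S n) = F n) -> F m = 0 ->
  rsum (S m) G = rsum (S m) F.
Proof.
  intros HG HGF HF. rewrite rsum_first, HG, (rsum_ext m _ F) by auto.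
  simpl. rewrite HF. ring.
Qed.

Lemma Csum_pick n F s :
  (forall k, k <> s -> F k = C0) -> ((n <= s)%nat -> F s = C0) -> Csum n F = F s.
Proof.
  intros H1 H2. apply Cext.
  - rewrite Re_Csum. apply (rsum_pick n (fun k => Re (F k)));
      intros; [rewrite H1 | rewrite H2]; auto.
  - rewrite Im_Csum. apply (rsum_pick n (fun k => Im (F k)));
      intros; [rewrite H1 | rewrite H2]; auto.
Qed.

Lemma Csum_two n F i j : i <> j -> (i < n)%nat -> (j < n)%nat ->
  (forall k, k <> i -> k <> j -> F k = C0) -> Csum n F = Cadd (F i) (F j).
Proof.
  intros Hij Hi Hj H.
  assert (Hsplit : forall g : nat -> R, (forall k, k <> i -> k <> j -> g k = 0) ->
            rsum n g = g i + g j).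
  { intros g Hg.
    rewrite (rsum_ext n g (fun k => (if Nat.eqb k i then g k else 0)
                                   + (if Nat.eqb k i then 0 else g k)))
      by (intros k _; destruct (Nat.eqb k i); ring).
    rewrite rsum_plus, (rsum_pick n _ i), (rsum_pick n _ j).
    - rewrite Nat.eqb_refl. apply Nat.eqb_neq in Hij.
      rewrite Nat.eqb_sym, Hij. ring.
    - intros k Hk. destruct (Nat.eqb_spec k i); auto.
    - lia.
    - intros k Hk. destruct (Nat.eqb_spec k i); [lia | reflexivity].
    - lia. }
  apply Cext; [rewrite Re_Csum | rewrite Im_Csum];
    apply (Hsplit (fun k => _ (F k))); intros k Hki Hkj; simpl; rewrite H; auto.
Qed.

Record state (d : nat) (rho : op) : Prop := {
  st_supp : supported d rho;
  st_diag_real : forall i, Im (rho i i) = 0;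
  st_pop_nonneg : forall i, 0 <= Re (rho i i);
  st_cauchy_schwarz : forall i j, Cnorm2 (rho i j) <= Re (rho i i) * Re (rho j j);
  st_trace : rsum d (fun i => Re (rho i i)) = 1 }.

Definition qform (d : nat) (rho : op) (v : nat -> Defs.C) : R :=
  Re (Csum d (fun a => Csum d (fun b => Cmul (Cmul (Cconj (v a)) (rho a b)) (v b)))).

Definition vec1 (i : nat) (x : Defs.C) : nat -> Defs.C :=
  fun k => if Nat.eqb k i then x else C0.
Definition vec2 (i j : nat) (x y : Defs.C) : nat -> Defs.C :=
  fun k => if Nat.eqb k i then x else if Nat.eqb k j then y else C0.

Lemma qform_vec1 d rho i x : (i < d)%nat ->
  qform d rho (vec1 i x) = Re (Cmul (Cmul (Cconj x) (rho i i)) x).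
Proof.
  intros Hi. unfold qform.
  assert (Hv0 : forall k, k <> i -> vec1 i x k = C0)
    by (intros k Hk; unfold vec1; apply Nat.eqb_neq in Hk; now rewrite Hk).
  assert (Hvi : vec1 i x i = x) by (unfold vec1; now rewrite Nat.eqb_refl).
  rewrite (Csum_pick d _ i); [| | lia].
  - rewrite (Csum_pick d _ i); [now rewrite Hvi | | lia].
    intros k Hk. now rewrite (Hv0 k Hk), Cmul_0_r.
  - intros k Hk. rewrite (Hv0 k Hk), Cconj_0.
    rewrite (Csum_pick d _ i); [| intros | lia]; now rewrite !Cmul_0_l.
Qed.

Lemma qform_vec2 d rho i j x y : i <> j -> (i < d)%nat -> (j < d)%nat ->
  qform d rho (vec2 i j x y) =
    Re (Cmul (Cmul (Cconj x) (rho i i)) x) + Re (Cmul (Cmul (Cconj x) (rho i j)) y)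
  + Re (Cmul (Cmul (Cconj y) (rho j i)) x) + Re (Cmul (Cmul (Cconj y) (rho j j)) y).
Proof.
  intros Hij Hi Hj. unfold qform.
  assert (Hv : vec2 i j x y i = x /\ vec2 i j x y j = y /\
               forall k, k <> i -> k <> j -> vec2 i j x y k = C0).
  { unfold vec2. rewrite !Nat.eqb_refl. pose proof Hij as Hji.
    apply Nat.eqb_neq in Hji. rewrite Nat.eqb_sym, Hji.
    split; [|split]; auto. intros k Hki Hkj.
    apply Nat.eqb_neq in Hki, Hkj. now rewrite Hki, Hkj. }
  destruct Hv as (Hvi & Hvj & Hv0).
  rewrite (Csum_two d _ i j Hij Hi Hj).
  - rewrite !(Csum_two d _ i j Hij Hi Hj), Hvi, Hvj.
    + simpl. ring.
    + intros k Hki Hkj. now rewrite (Hv0 k Hki Hkj), Cmul_0_r.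
    + intros k Hki Hkj. now rewrite (Hv0 k Hki Hkj), Cmul_0_r.
  - intros k Hki Hkj. rewrite (Hv0 k Hki Hkj), Cconj_0.
    rewrite (Csum_pick d _ i); [| intros | lia]; now rewrite !Cmul_0_l.
Qed.

(** A nonnegative quadratic [a t^2 - 2 N t + N b] has nonpositive
    discriminant, which reads [N <= a b]. *)
Lemma discriminant_bound a b N : 0 <= a -> 0 <= b -> 0 <= N ->
  (forall t, 0 <= a * t ^ 2 - 2 * N * t + N * b) -> N <= a * b.
Proof.
  intros Ha Hb HN Hq. destruct (Rle_lt_or_eq_dec 0 a Ha) as [Ha'|<-].
  - pose proof (Hq (N / a)) as Q.
    assert (0 <= N * (a * b - N)).
    { replace (N * (a * b - N)) with (a * (a * (N / a) ^ 2 - 2 * N * (N / a) + N * b))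
        by (field; lra).
      now apply Rmult_le_pos. }
    destruct (Rle_lt_or_eq_dec 0 N HN); nra.
  - pose proof (Hq (b + 1)). nra.
Qed.

Lemma density_state d rho : density d rho -> state d rho.
Proof.
  intros (Hs & Hh & Hp & Ht).
  assert (Him : forall i, Im (rho i i) = 0).
  { intros i. pose proof (Hh i i) as E. destruct (rho i i) as [r m]. simpl. injection E. lra. }
  assert (Hre : forall i, 0 <= Re (rho i i)).
  { intros i. destruct (Nat.lt_ge_cases i d) as [Hi|Hi].
    - pose proof (Hp (vec1 i Defs.C1)) as P. fold (qform d rho (vec1 i Defs.C1)) in P.
      rewrite qform_vec1 in P by auto. destruct (rho i i). simpl in *. lra.
    - rewrite (Hs i i) by auto. simpl; lra. }
  split; auto.
  - intros i j. unfold Cnorm2.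
    destruct (Nat.lt_ge_cases i d) as [Hi|Hi]; [destruct (Nat.lt_ge_cases j d) as [Hj|Hj]|].
    + destruct (Nat.eq_dec i j) as [<-|Hij]; [rewrite Him; pose proof (Hre i); nra|].
      apply discriminant_bound; auto; [nra|]. intros t.
      pose proof (Hp (vec2 i j (RtoC t) (mkC (- Re (rho i j)) (Im (rho i j))))) as P.
      fold (qform d rho (vec2 i j (RtoC t) (mkC (- Re (rho i j)) (Im (rho i j))))) in P.
      rewrite qform_vec2, (Hh j i) in P by auto.
      pose proof (Him i). pose proof (Him j).
      destruct (rho i i), (rho j j), (rho i j). simpl in *. subst. nra.
    + rewrite (Hs i j) by auto. simpl. pose proof (Hre i). pose proof (Hre j). nra.
    + rewrite (Hs i j) by auto. simpl. pose proof (Hre i). pose proof (Hre j). nra.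
  - rewrite <- Re_Csum, Ht. reflexivity.
Qed.

Lemma sandwich_single d A rho (s : nat -> nat) i j : supported d rho ->
  (forall k, k <> s i -> A i k = C0) -> (forall k, k <> s j -> A j k = C0) ->
  sandwich d A rho i j = Cmul (Cmul (A i (s i)) (rho (s i) (s j))) (Cconj (A j (s j))).
Proof.
  intros Hs Hi Hj.
  assert (Hrow : forall k, Csum d (fun l => Cmul (Cmul (A i k) (rho k l)) (Cconj (A j l)))
                           = Cmul (Cmul (A i k) (rho k (s j))) (Cconj (A j (s j)))).
  { intros k.
    apply (Csum_pick d (fun l => Cmul (Cmul (A i k) (rho k l)) (Cconj (A j l)))).
    - intros l Hl. now rewrite (Hj l Hl), Cconj_0, Cmul_0_r.
    - intros Hl. now rewrite (Hs k (s j)), Cmul_0_r, Cmul_0_l by auto. }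
  unfold sandwich. rewrite (Csum_pick d _ (s i)).
  - apply Hrow.
  - intros k Hk. now rewrite Hrow, (Hi k Hk), !Cmul_0_l.
  - intros Hk. now rewrite Hrow, (Hs (s i) (s j)), Cmul_0_r, Cmul_0_l by auto.
Qed.

Lemma sandwich_real a b z :
  Cmul (Cmul (RtoC a) z) (Cconj (RtoC b)) = Rscale (a * b) z.
Proof. destruct z; apply Cext; simpl; ring. Qed.

Lemma sandwich_phase p a b z :
  Cmul (Cmul (Cmul (Cexpi p) (RtoC a)) z) (Cconj (Cmul (Cexpi p) (RtoC b)))
  = Rscale (a * b) z.
Proof.
  pose proof (sin2_cos2 p) as E. unfold Rsqr in E.
  destruct z as [x y]; unfold Cexpi; apply Cext; simpl.
  - transitivity (a * b * x * (sin p * sin p + cos p * cos p)); [ring | rewrite E; ring].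
  - transitivity (a * b * y * (sin p * sin p + cos p * cos p)); [ring | rewrite E; ring].
Qed.

Lemma dimD_S nbar : dimD nbar = S (4 * nbar + 3).
Proof. unfold dimD; lia. Qed.

Lemma nbar_lt_dim nbar : (nbar < dimD nbar)%nat.
Proof. unfold dimD. lia. Qed.

Section Kraus.
Variables (nbar : nat) (th2 phi : R).

(** Nonzero entries of the Kraus operators: [Mg] maps [|n-1>] to [|n>]
    with amplitude [g n], [Me] maps [|n>] to itself with amplitude [e n],
    and [Mm] maps [|n+1>] to [|n>] with amplitude [e^(i phi) h n]. *)
Definition g_coef (n : nat) : R := Re (Mg nbar th2 n (pred n)).
Definition e_coef (n : nat) : R := Re (Me nbar th2 n n).
Definition h_coef (n : nat) : R :=
  sqrt (INR (S n)) * (sin (th2 * sqrt (INR (S n)) / 2) / sqrt (INR (S n)))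
  * cos (theta1 nbar * sqrt (INR (S n) + 1) / 2).

Lemma Mg_off n k : k <> pred n -> Mg nbar th2 n k = C0.
Proof.
  intros H. unfold Mg, mul_fN, cre. destruct (Nat.eqb_spec n (S k)) as [->|].
  - simpl in H. lia.
  - apply Cext; simpl; ring.
Qed.

Lemma Mg_on n : Mg nbar th2 n (pred n) = RtoC (g_coef n).
Proof.
  apply Cext; [reflexivity|]. unfold Mg, mul_fN, cre.
  destruct (Nat.eqb n (S (pred n))); simpl; ring.
Qed.

Lemma Me_off n k : k <> n -> Me nbar th2 n k = C0.
Proof. intros H. unfold Me, fN. destruct (Nat.eqb_spec n k); [lia | reflexivity]. Qed.

Lemma Me_on n : Me nbar th2 n n = RtoC (e_coef n).
Proof. unfold e_coef, Me, fN. now rewrite Nat.eqb_refl. Qed.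

Lemma Mm_off n k : k <> S n -> Mm nbar th2 phi n k = C0.
Proof.
  intros H. unfold Mm, scale_op, mul_fN, ann.
  destruct (Nat.eqb_spec k (S n)); [lia | apply Cext; simpl; ring].
Qed.

Lemma Mm_on n : Mm nbar th2 phi n (S n) = Cmul (Cexpi phi) (RtoC (h_coef n)).
Proof.
  unfold Mm, scale_op, mul_fN, ann, h_coef. rewrite Nat.eqb_refl.
  apply Cext; simpl; ring.
Qed.

Lemma Phi_entry rho i j : supported (dimD nbar) rho ->
  Phi nbar th2 phi rho i j =
  Cadd (Cadd (Rscale (g_coef i * g_coef j) (rho (pred i) (pred j)))
             (Rscale (e_coef i * e_coef j) (rho i j)))
       (Rscale (h_coef i * h_coef j) (rho (S i) (S j))).
Proof.
  intros Hs. unfold Phi, op_add.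
  rewrite (sandwich_single _ _ _ pred i j Hs (Mg_off i) (Mg_off j)).
  rewrite (sandwich_single _ _ _ (fun x => x) i j Hs (Me_off i) (Me_off j)).
  rewrite (sandwich_single _ _ _ S i j Hs (Mm_off i) (Mm_off j)).
  now rewrite !Mg_on, !Me_on, !Mm_on, !sandwich_real, sandwich_phase.
Qed.

Lemma pop_Phi rho n : supported (dimD nbar) rho ->
  Re (Phi nbar th2 phi rho n n) = g_coef n ^ 2 * Re (rho (pred n) (pred n))
    + e_coef n ^ 2 * Re (rho n n) + h_coef n ^ 2 * Re (rho (S n) (S n)).
Proof. intros Hs. rewrite Phi_entry by auto. simpl. ring. Qed.

End Kraus.

Section Rates.
Variables (nbar : nat) (th2 : R).

(** The half angles [alpha_n / 2] and [beta_n / 2] in which all amplitudes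
    take a polynomial form. *)
Definition a_ (n : nat) : R := alpha nbar n / 2.
Definition b_ (n : nat) : R := beta th2 n / 2.

Lemma sqrt_succ_pos n : 0 < sqrt (INR n + 1).
Proof. apply sqrt_lt_R0. pose proof (pos_INR n). lra. Qed.

Lemma theta1_angle n : theta1 nbar * sqrt (INR n + 1) = 2 * a_ n.
Proof.
  unfold a_, alpha, theta1. rewrite sqrt_div_alt by (pose proof (pos_INR nbar); lra).
  pose proof (sqrt_succ_pos nbar). field. lra.
Qed.

Lemma theta2_angle n : th2 * sqrt (INR n) / 2 = 2 * b_ n.
Proof. unfold b_, beta. field. Qed.

Lemma b_zero : b_ 0 = 0.
Proof. unfold b_, beta. simpl INR. rewrite sqrt_0. field. Qed.

Lemma g_coef_S n : g_coef nbar th2 (S n) = 2 * cos (b_ n) ^ 2 * sin (a_ n) * cos (a_ n).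
Proof.
  unfold g_coef, Mg, mul_fN, cre. simpl pred. rewrite Nat.eqb_refl. cbn [Re Im Cmul RtoC].
  rewrite S_INR, theta2_angle, theta1_angle, cos_2a_cos, sin_2a.
  pose proof (sqrt_succ_pos n). field. lra.
Qed.

Lemma e_coef_eq n : e_coef nbar th2 n =
  cos (a_ n) ^ 2 * (cos (b_ n) ^ 2 - sin (b_ n) ^ 2) - sin (a_ n) ^ 2.
Proof.
  unfold e_coef, Me, fN. rewrite Nat.eqb_refl. cbn [Re RtoC].
  rewrite theta2_angle, cos_2a.
  replace (theta1 nbar * sqrt (INR n + 1) / 2) with (a_ n)
    by (rewrite theta1_angle; field).
  ring.
Qed.

Lemma h_coef_eq m : h_coef nbar th2 m =
  2 * sin (b_ (S m)) * cos (b_ (S m)) * cos (a_ (S m)).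
Proof.
  unfold h_coef. rewrite theta2_angle, sin_2a.
  replace (theta1 nbar * sqrt (INR (S m) + 1) / 2) with (a_ (S m))
    by (rewrite theta1_angle; field).
  rewrite S_INR. pose proof (sqrt_succ_pos m). field. lra.
Qed.

Definition rate_up (n : nat) : R := g_coef nbar th2 (S n) ^ 2.
Definition rate_stay (n : nat) : R := e_coef nbar th2 n ^ 2.
Definition rate_down (n : nat) : R :=
  match n with O => 0 | S m => h_coef nbar th2 m ^ 2 end.

Lemma rate_up_eq n : rate_up n = 4 * cos (b_ n) ^ 4 * sin (a_ n) ^ 2 * cos (a_ n) ^ 2.
Proof. unfold rate_up. rewrite g_coef_S. ring. Qed.

Lemma rate_down_eq n : rate_down n = 4 * sin (b_ n) ^ 2 * cos (b_ n) ^ 2 * cos (a_ n) ^ 2.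
Proof.
  destruct n as [|m]; simpl rate_down.
  - rewrite b_zero, sin_0. ring.
  - rewrite h_coef_eq. ring.
Qed.

Lemma rates_sum n : rate_up n + rate_stay n + rate_down n = 1.
Proof.
  unfold rate_stay. rewrite rate_up_eq, rate_down_eq, e_coef_eq.
  pose proof (sin2_cos2 (a_ n)) as Ea. pose proof (sin2_cos2 (b_ n)) as Eb.
  unfold Rsqr in Ea, Eb.
  replace (sin (a_ n) ^ 2) with (1 - cos (a_ n) ^ 2) by (simpl; lra).
  replace (sin (b_ n) ^ 2) with (1 - cos (b_ n) ^ 2) by (simpl; lra).
  ring.
Qed.

End Rates.

Section Angles.
Variable nbar : nat.

Lemma a_eq n : a_ nbar n = PI / 2 * sqrt ((INR n + 1) / (INR nbar + 1)).
Proof. unfold a_, alpha. field. Qed.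

Lemma sqrt_lt_const x c : 0 <= x -> 0 < c -> x < c * c -> sqrt x < c.
Proof. intros. rewrite <- (sqrt_square c) by lra. apply sqrt_lt_1_alt. lra. Qed.

Lemma a_below n : (n < nbar)%nat -> 0 < a_ nbar n < PI / 2.
Proof.
  intros H. apply lt_INR in H. pose proof (pos_INR n). pose proof PI_RGT_0.
  assert (Hr : 0 < (INR n + 1) / (INR nbar + 1) < 1 * 1).
  { split; [apply Rdiv_lt_0_compat; lra|]. apply Rmult_lt_reg_r with (INR nbar + 1); [lra|].
    field_simplify; lra. }
  pose proof (sqrt_lt_R0 _ (proj1 Hr)).
  assert (sqrt ((INR n + 1) / (INR nbar + 1)) < 1) by (apply sqrt_lt_const; lra).
  rewrite a_eq. nra.
Qed.

Lemma a_at_nbar : a_ nbar nbar = PI / 2.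
Proof.
  rewrite a_eq. replace ((INR nbar + 1) / (INR nbar + 1)) with 1
    by (field; pose proof (pos_INR nbar); lra).
  rewrite sqrt_1. ring.
Qed.

Lemma a_above n : (nbar < n < 4 * nbar + 3)%nat -> PI / 2 < a_ nbar n < PI.
Proof.
  intros [H1 H2]. apply lt_INR in H1, H2. rewrite plus_INR, mult_INR in H2. simpl in H2.
  pose proof (pos_INR nbar). pose proof PI_RGT_0.
  assert (Hr : 1 * 1 < (INR n + 1) / (INR nbar + 1) < 2 * 2).
  { split; apply Rmult_lt_reg_r with (INR nbar + 1); try lra; field_simplify; try lra. }
  assert (1 < sqrt ((INR n + 1) / (INR nbar + 1))).
  { rewrite <- sqrt_1 at 1. apply sqrt_lt_1_alt. lra. }
  assert (sqrt ((INR n + 1) / (INR nbar + 1)) < 2) by (apply sqrt_lt_const; lra).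
  rewrite a_eq. nra.
Qed.

Lemma a_top : a_ nbar (4 * nbar + 3) = PI.
Proof.
  rewrite a_eq. replace ((INR (4 * nbar + 3) + 1) / (INR nbar + 1)) with (2 * 2).
  - rewrite sqrt_square by lra. field.
  - rewrite plus_INR, mult_INR. simpl. field. pose proof (pos_INR nbar). lra.
Qed.

End Angles.

Lemma sq_pos x : x <> 0 -> 0 < x ^ 2.
Proof. intros H. pose proof (Rsqr_pos_lt x H). unfold Rsqr in *. simpl. lra. Qed.

Lemma sin_sq_le_1 x : sin x ^ 2 <= 1.
Proof. pose proof (sin2_cos2 x). unfold Rsqr in *. simpl. nra. Qed.

Lemma cos_sq_le_1 x : cos x ^ 2 <= 1.
Proof. pose proof (sin2_cos2 x). unfold Rsqr in *. simpl. nra. Qed.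

Ltac prod_pos := repeat match goal with
  | |- 0 < _ * _ => apply Rmult_lt_0_compat
  | |- _ * _ > 0 => apply Rmult_lt_0_compat
  end.

Section Lyapunov.
Variables (nbar : nat) (th2 eta : R) (f : nat -> R).
Hypothesis htheta2 : 0 < th2.
Hypothesis hres : forall (n k : nat), (1 <= n <= 4 * nbar + 3)%nat ->
  th2 <> INR k * PI / sqrt (INR n).
Hypothesis heta : 0 < eta < 1.
Hypothesis hf : f_spec nbar th2 eta f.

(** Non-resonance: on the levels [1..4 nbar + 3] the half angle [b_n] is
    never a multiple of [pi/4], so [sin b_n] and [cos b_n] do not vanish. *)
Lemma b_nonresonant n (z : Z) : (1 <= n <= 4 * nbar + 3)%nat ->
  b_ th2 n <> IZR z * (PI / 4).
Proof.
  intros Hn E. pose proof PI_RGT_0.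
  assert (Hs : 0 < sqrt (INR n)) by (apply sqrt_lt_R0, lt_0_INR; lia).
  assert (Hz : (0 <= z)%Z).
  { apply le_IZR. unfold b_, beta in E. nra. }
  apply (hres n (Z.to_nat z) Hn).
  rewrite INR_IZR_INZ, Z2Nat.id by auto.
  unfold b_, beta in E. field_simplify_eq; [|lra]. lra.
Qed.

Lemma sin_b_nonzero n : (1 <= n <= 4 * nbar + 3)%nat -> sin (b_ th2 n) <> 0.
Proof.
  intros Hn E. apply sin_eq_0_0 in E as [k Hk].
  apply (b_nonresonant n (4 * k) Hn). rewrite Hk, mult_IZR. field.
Qed.

Lemma cos_b_nonzero n : (1 <= n <= 4 * nbar + 3)%nat -> cos (b_ th2 n) <> 0.
Proof.
  intros Hn E. apply cos_eq_0_0 in E as [k Hk].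
  apply (b_nonresonant n (4 * k + 2) Hn). rewrite Hk, plus_IZR, mult_IZR. field.
Qed.

Lemma f_increasing_above n : (nbar < n <= 4 * nbar + 3)%nat ->
  f (pred n) < f n /\ 1 <= f n.
Proof.
  destruct hf as (f0 & f1 & _ & _ & fup & _).
  intros Hn. replace n with (S nbar + (n - S nbar))%nat by lia.
  assert (Hk : (n - S nbar <= 3 * nbar + 2)%nat) by lia.
  induction (n - S nbar)%nat as [|k IH].
  - rewrite Nat.add_0_r. simpl pred. rewrite f0, f1. lra.
  - destruct (IH ltac:(lia)) as [IH1 IH2].
    set (m := (S nbar + k)%nat) in *.
    replace (S nbar + S k)%nat with (S m) by (unfold m; lia).
    change (pred (S m)) with m.
    rewrite (fup m) by (unfold m; lia). fold (b_ th2 m).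
    pose proof (sq_pos _ (sin_b_nonzero m ltac:(unfold m; lia))).
    assert (0 < eta * sin (b_ th2 m) ^ 2 * (f m - f (pred m))) by (prod_pos; lra).
    lra.
Qed.

Lemma f_decreasing_below n : (n < nbar)%nat -> f (S n) < f n /\ 1 <= f n.
Proof.
  destruct hf as (f0 & _ & f1 & fdown & _ & _).
  intros Hn. replace n with (nbar - 1 - (nbar - 1 - n))%nat by lia.
  assert (Hk : (nbar - 1 - n < nbar)%nat) by lia.
  induction (nbar - 1 - n)%nat as [|k IH].
  - replace (nbar - 1 - 0)%nat with (pred nbar) by lia.
    replace (S (pred nbar)) with nbar by lia. rewrite f0, f1. lra.
  - destruct (IH ltac:(lia)) as [IH1 IH2].
    set (m := (nbar - 1 - k)%nat) in *.
    replace (nbar - 1 - S k)%nat with (pred m) by lia.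
    replace (S (pred m)) with m by lia.
    rewrite fdown by lia. fold (b_ th2 m) (a_ nbar m).
    destruct (a_below nbar m ltac:(lia)).
    assert (0 < sin (a_ nbar m)) by (apply sin_gt_0; lra).
    pose proof (sq_pos _ (cos_b_nonzero m ltac:(lia))).
    assert (0 < eta * sin (a_ nbar m) ^ 2 * cos (b_ th2 m) ^ 2 * (f m - f (S m)))
      by (prod_pos; try lra; apply sq_pos; lra).
    lra.
Qed.

Lemma f_ge_one n : (n < dimD nbar)%nat -> n <> nbar -> 1 <= f n.
Proof.
  intros H1 H2. rewrite dimD_S in H1. destruct (Nat.lt_ge_cases n nbar).
  - now apply f_decreasing_below.
  - apply f_increasing_above. lia.
Qed.

(** Expected one-step change of [f] from level [n] under [Phi]. *)
Definition drift (n : nat) : R :=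
  rate_up nbar th2 n * (f (S n) - f n) + rate_down nbar th2 n * (f (pred n) - f n).

Lemma drift_at_nbar : drift nbar = 0.
Proof. unfold drift. rewrite rate_up_eq, rate_down_eq, a_at_nbar, cos_PI2. ring. Qed.

Lemma drift_below n : (n < nbar)%nat -> drift n < 0.
Proof.
  intros Hn. destruct (a_below nbar n Hn). pose proof PI_RGT_0.
  destruct (f_decreasing_below n Hn) as [Hdec _].
  assert (Hsa : 0 < sin (a_ nbar n) ^ 2) by (apply sq_pos; apply Rgt_not_eq, sin_gt_0; lra).
  assert (Hca : 0 < cos (a_ nbar n) ^ 2) by (apply sq_pos; apply Rgt_not_eq, cos_gt_0; lra).
  unfold drift. rewrite rate_up_eq, rate_down_eq. destruct n as [|m].
  - rewrite b_zero, sin_0, cos_0. simpl pred.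
    assert (0 < sin (a_ nbar 0) ^ 2 * cos (a_ nbar 0) ^ 2) by (prod_pos; lra).
    nra.
  - destruct hf as (_ & _ & _ & fdown & _ & _).
    rewrite (fdown (S m)) by lia. simpl pred. fold (b_ th2 (S m)) (a_ nbar (S m)).
    pose proof (sq_pos _ (cos_b_nonzero (S m) ltac:(lia))) as Hcb.
    pose proof (sin_sq_le_1 (b_ th2 (S m))).
    set (sa := sin (a_ nbar (S m))) in *. set (ca := cos (a_ nbar (S m))) in *.
    set (sb := sin (b_ th2 (S m))) in *. set (cb := cos (b_ th2 (S m))) in *.
    set (e := f (S m) - f (S (S m))) in *.
    replace (4 * cb ^ 4 * sa ^ 2 * ca ^ 2 * (f (S (S m)) - f (S m))
             + 4 * sb ^ 2 * cb ^ 2 * ca ^ 2 * (f (S m) + eta * sa ^ 2 * cb ^ 2 * e - f (S m)))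
      with ((4 * e * cb ^ 2 * cb ^ 2 * sa ^ 2 * ca ^ 2) * (eta * sb ^ 2 - 1))
      by (unfold e; ring).
    apply Rmult_pos_neg; [unfold e; prod_pos; lra | nra].
Qed.

Lemma drift_above n : (nbar < n < 4 * nbar + 3)%nat -> drift n < 0.
Proof.
  intros Hn. destruct (a_above nbar n Hn). pose proof PI_RGT_0.
  destruct (f_increasing_above n ltac:(lia)) as [Hinc _].
  destruct hf as (_ & _ & _ & _ & fup & _).
  unfold drift. rewrite rate_up_eq, rate_down_eq, (fup n Hn). fold (b_ th2 n).
  pose proof (sq_pos _ (sin_b_nonzero n ltac:(lia))) as Hsb.
  pose proof (sq_pos _ (cos_b_nonzero n ltac:(lia))) as Hcb.
  assert (Hca : 0 < cos (a_ nbar n) ^ 2) by (apply sq_pos; apply Rlt_not_eq, cos_lt_0; lra).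
  pose proof (cos_sq_le_1 (b_ th2 n)). pose proof (sin_sq_le_1 (a_ nbar n)).
  set (sa := sin (a_ nbar n)) in *. set (ca := cos (a_ nbar n)) in *.
  set (sb := sin (b_ th2 n)) in *. set (cb := cos (b_ th2 n)) in *.
  set (dlt := f n - f (pred n)) in *.
  replace (4 * cb ^ 4 * sa ^ 2 * ca ^ 2 * (f n + eta * sb ^ 2 * dlt - f n)
           + 4 * sb ^ 2 * cb ^ 2 * ca ^ 2 * (f (pred n) - f n))
    with ((4 * dlt * sb ^ 2 * cb ^ 2 * ca ^ 2) * (eta * (cb ^ 2 * sa ^ 2) - 1))
    by (unfold dlt; ring).
  assert (cb ^ 2 * sa ^ 2 <= 1) by nra.
  apply Rmult_pos_neg; [unfold dlt; prod_pos; lra | nra].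
Qed.

Lemma drift_top : drift (4 * nbar + 3) < 0.
Proof.
  set (n := (4 * nbar + 3)%nat).
  destruct (f_increasing_above n ltac:(lia)) as [Hinc _].
  destruct hf as (_ & _ & _ & _ & _ & ftop).
  unfold drift. rewrite rate_up_eq, rate_down_eq, (ftop (S n)) by lia.
  unfold n at 3. rewrite a_top, cos_PI.
  pose proof (sq_pos _ (sin_b_nonzero n ltac:(lia))).
  pose proof (sq_pos _ (cos_b_nonzero n ltac:(lia))).
  assert (0 < 4 * sin (b_ th2 n) ^ 2 * cos (b_ th2 n) ^ 2 * (-1) ^ 2)
    by (prod_pos; lra).
  fold n. nra.
Qed.

Lemma drift_neg n : (n < dimD nbar)%nat -> n <> nbar -> drift n < 0.
Proof.
  intros H1 H2. rewrite dimD_S in H1.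
  destruct (Nat.lt_ge_cases n nbar); [now apply drift_below|].
  destruct (Nat.eq_dec n (4 * nbar + 3)) as [->|]; [apply drift_top|].
  apply drift_above. lia.
Qed.

End Lyapunov.

Lemma cnorm2_scale u v z P Q : Cnorm2 z <= P * Q ->
  Cnorm2 (Rscale (u * v) z) <= (u ^ 2 * P) * (v ^ 2 * Q).
Proof.
  unfold Cnorm2, Rscale. cbn [Re Im]. intros H.
  replace ((u * v * Re z) ^ 2 + (u * v * Im z) ^ 2) with ((u * v) ^ 2 * (Re z ^ 2 + Im z ^ 2))
    by ring.
  replace (u ^ 2 * P * (v ^ 2 * Q)) with ((u * v) ^ 2 * (P * Q)) by ring.
  apply Rmult_le_compat_l; [apply pow2_ge_0 | exact H].
Qed.

Lemma cnorm2_add z w X1 Y1 X2 Y2 : 0 <= X1 -> 0 <= Y1 -> 0 <= X2 -> 0 <= Y2 ->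
  Cnorm2 z <= X1 * Y1 -> Cnorm2 w <= X2 * Y2 ->
  Cnorm2 (Cadd z w) <= (X1 + X2) * (Y1 + Y2).
Proof.
  unfold Cnorm2. destruct z as [a b], w as [c e]. cbn [Re Im Cadd]. intros H1 H2 H3 H4 Hz Hw.
  set (s := a * c + b * e). set (t := (X1 * Y2 + X2 * Y1) / 2).
  assert (Hs2 : s ^ 2 <= (a ^ 2 + b ^ 2) * (c ^ 2 + e ^ 2)).
  { pose proof (pow2_ge_0 (a * e - b * c)). unfold s. nra. }
  assert (Hprod : (a ^ 2 + b ^ 2) * (c ^ 2 + e ^ 2) <= (X1 * Y1) * (X2 * Y2))
    by (apply Rmult_le_compat; nra).
  assert (Ht2 : (X1 * Y1) * (X2 * Y2) <= t ^ 2).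
  { pose proof (pow2_ge_0 (X1 * Y2 - X2 * Y1)). unfold t. nra. }
  assert (Ht : 0 <= t) by (unfold t; nra).
  assert (s <= t) by nra.
  unfold s, t in *. nra.
Qed.

Lemma Vf_eq d (f : nat -> R) rho : Vf d f rho = rsum d (fun n => f n * Re (rho n n)).
Proof. unfold Vf. rewrite Re_Csum. apply rsum_ext. intros. simpl. ring. Qed.

Section Populations.
Variables (nbar : nat) (th2 phi : R).
Local Notation d := (dimD nbar).
Local Notation Phi' := (Phi nbar th2 phi).

Lemma g_coef_zero : g_coef nbar th2 0 = 0.
Proof. unfold g_coef, Mg, mul_fN, cre. simpl. ring. Qed.

Lemma g_coef_top : g_coef nbar th2 d = 0.
Proof. rewrite dimD_S, g_coef_S, a_top, sin_PI. ring. Qed.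

Lemma rate_up_top : rate_up nbar th2 (4 * nbar + 3) = 0.
Proof. unfold rate_up. rewrite <- dimD_S, g_coef_top. ring. Qed.

Lemma raised_term_out rho i j : supported d rho -> (d <= i \/ d <= j)%nat ->
  Rscale (g_coef nbar th2 i * g_coef nbar th2 j) (rho (pred i) (pred j)) = C0.
Proof.
  intros Hs [Hi|Hj].
  - destruct (Nat.eq_dec i d) as [->|Hne].
    + rewrite g_coef_top, Rmult_0_l. apply Rscale_0_l.
    + rewrite (Hs (pred i) (pred j)) by lia. apply Rscale_0_r.
  - destruct (Nat.eq_dec j d) as [->|Hne].
    + rewrite g_coef_top, Rmult_0_r. apply Rscale_0_l.
    + rewrite (Hs (pred i) (pred j)) by lia. apply Rscale_0_r.
Qed.

Lemma Phi_supported rho : supported d rho -> supported d (Phi' rho).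
Proof.
  intros Hs i j Hij. rewrite Phi_entry, raised_term_out, (Hs i j), (Hs (S i) (S j))
    by (auto; lia).
  apply Cext; simpl; ring.
Qed.

Lemma weighted_pop_Phi rho (w : nat -> R) : supported d rho ->
  rsum d (fun n => w n * Re (Phi' rho n n)) =
  rsum d (fun n => Re (rho n n) * (rate_up nbar th2 n * w (S n)
     + rate_stay nbar th2 n * w n + rate_down nbar th2 n * w (pred n))).
Proof.
  intros Hs. set (p n := Re (rho n n)).
  rewrite (rsum_ext _ _ (fun n => w n * (g_coef nbar th2 n ^ 2 * p (pred n))
      + w n * (e_coef nbar th2 n ^ 2 * p n) + w n * (h_coef nbar th2 n ^ 2 * p (S n))))
    by (intros; rewrite pop_Phi by auto; unfold p; ring).
  rewrite (rsum_ext d (fun n => p n * (_ + _ + _))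
      (fun n => p n * (rate_up nbar th2 n * w (S n)) + p n * (rate_stay nbar th2 n * w n)
                + p n * (rate_down nbar th2 n * w (pred n)))) by (intros; ring).
  rewrite !rsum_plus, dimD_S. f_equal; [f_equal|].
  - apply rsum_shift.
    + rewrite g_coef_zero. ring.
    + intros n. cbn [Nat.pred]. unfold rate_up. ring.
    + rewrite rate_up_top. ring.
  - apply rsum_ext. intros. unfold rate_stay. ring.
  - symmetry. apply rsum_shift.
    + simpl rate_down. ring.
    + intros n. simpl. ring.
    + unfold p. rewrite <- dimD_S, (Hs d d) by auto. simpl. ring.
Qed.

Lemma Phi_trace rho : supported d rho ->
  rsum d (fun n => Re (Phi' rho n n)) = rsum d (fun n => Re (rho n n)).
Proof.
  intros Hs. transitivity (rsum d (fun n => 1 * Re (Phi' rho n n))).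
  { apply rsum_ext. intros. ring. }
  rewrite weighted_pop_Phi by auto. apply rsum_ext. intros n _.
  transitivity (Re (rho n n) *
    (rate_up nbar th2 n + rate_stay nbar th2 n + rate_down nbar th2 n)); [ring|].
  rewrite rates_sum. ring.
Qed.

Lemma Vf_Phi (f : nat -> R) rho : supported d rho ->
  Vf d f (Phi' rho) = Vf d f rho + rsum d (fun n => Re (rho n n) * drift nbar th2 f n).
Proof.
  intros Hs. rewrite !Vf_eq, weighted_pop_Phi, <- rsum_plus by auto.
  apply rsum_ext. intros n _. unfold drift.
  pose proof (rates_sum nbar th2 n).
  replace (rate_stay nbar th2 n) with (1 - rate_up nbar th2 n - rate_down nbar th2 n) by lra.
  ring.
Qed.

Lemma Phi_state rho : state d rho -> state d (Phi' rho).
Proof.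
  intros [Hs Him Hre Hcs Htr].
  assert (Hnn : forall u i, 0 <= u ^ 2 * Re (rho i i))
    by (intros; apply Rmult_le_pos; [apply pow2_ge_0 | auto]).
  split.
  - now apply Phi_supported.
  - intros i. rewrite Phi_entry by auto. simpl. rewrite !Him. ring.
  - intros i. rewrite pop_Phi by auto. pose proof (Hnn (g_coef nbar th2 i) (pred i)).
    pose proof (Hnn (e_coef nbar th2 i) i). pose proof (Hnn (h_coef nbar th2 i) (S i)). lra.
  - intros i j. rewrite !pop_Phi, Phi_entry by auto.
    apply cnorm2_add; try apply Rplus_le_le_0_compat; try apply Hnn.
    + apply cnorm2_add; try apply Hnn; apply cnorm2_scale, Hcs.
    + apply cnorm2_scale, Hcs.
  - rewrite Phi_trace; auto.
Qed.

End Populations.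

Section Leakage.
Variables (d s : nat).
Hypothesis hs : (s < d)%nat.

Definition leak (rho : op) : R :=
  rsum d (fun n => if Nat.eqb n s then 0 else Re (rho n n)).

Lemma trace_split rho :
  rsum d (fun n => Re (rho n n)) = Re (rho s s) + leak rho.
Proof.
  unfold leak.
  rewrite (rsum_ext d _ (fun n => (if Nat.eqb n s then Re (rho n n) else 0)
                                 + (if Nat.eqb n s then 0 else Re (rho n n))))
    by (intros n _; destruct (Nat.eqb n s); ring).
  rewrite rsum_plus, (rsum_pick d _ s), Nat.eqb_refl; [reflexivity | | lia].
  intros k Hk. apply Nat.eqb_neq in Hk. now rewrite Hk.
Qed.

Lemma leak_nonneg rho : state d rho -> 0 <= leak rho.
Proof.
  intros HI. apply rsum_nonneg. intros k _.
  destruct (Nat.eqb k s); [lra | apply (st_pop_nonneg _ _ HI)].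
Qed.

Lemma pop_le_leak rho i : state d rho -> i <> s -> Re (rho i i) <= leak rho.
Proof.
  intros HI Hi. destruct (Nat.lt_ge_cases i d) as [Hd|Hd].
  - unfold leak. apply Nat.eqb_neq in Hi.
    assert (Hnn : forall k, (k < d)%nat -> 0 <= (if Nat.eqb k s then 0 else Re (rho k k)))
      by (intros k _; destruct (Nat.eqb k s); [lra | apply (st_pop_nonneg _ _ HI)]).
    pose proof (rsum_le_term d _ i Hnn Hd) as L. cbn beta in L. now rewrite Hi in L.
  - rewrite (st_supp _ _ HI i i) by auto. simpl. now apply leak_nonneg.
Qed.

Lemma pop_le_one rho i : state d rho -> Re (rho i i) <= 1.
Proof.
  intros HI. destruct (Nat.lt_ge_cases i d) as [Hd|Hd].
  - rewrite <- (st_trace _ _ HI).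
    apply (rsum_le_term d (fun n => Re (rho n n))); auto.
    intros k _. apply (st_pop_nonneg _ _ HI).
  - rewrite (st_supp _ _ HI i i) by auto. simpl. lra.
Qed.

Lemma entry_bound rho i j : state d rho ->
  (Re (rho i j) - Re (proj s i j)) ^ 2 <= leak rho /\
  (Im (rho i j) - Im (proj s i j)) ^ 2 <= leak rho.
Proof.
  intros HI. pose proof (leak_nonneg rho HI). pose proof (st_cauchy_schwarz _ _ HI i j).
  pose proof (pop_le_one rho i HI). pose proof (pop_le_one rho j HI).
  pose proof (st_pop_nonneg _ _ HI i). pose proof (st_pop_nonneg _ _ HI j).
  unfold proj, Cnorm2 in *.
  destruct (Nat.eqb_spec i s) as [->|Hi]; destruct (Nat.eqb_spec j s) as [->|Hj]; simpl.
  - pose proof (trace_split rho) as E. rewrite (st_trace _ _ HI) in E.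
    rewrite (st_diag_real _ _ HI). split; nra.
  - pose proof (pop_le_leak rho j HI Hj). split; nra.
  - pose proof (pop_le_leak rho i HI Hi). split; nra.
  - pose proof (pop_le_leak rho i HI Hi). split; nra.
Qed.

Lemma no_leak_proj rho : state d rho -> leak rho = 0 -> rho = proj s.
Proof.
  intros HI Hq.
  assert (Hp : forall n, n <> s -> Re (rho n n) = 0).
  { intros n Hn. pose proof (pop_le_leak rho n HI Hn). pose proof (st_pop_nonneg _ _ HI n). lra. }
  apply functional_extensionality; intros a. apply functional_extensionality; intros b.
  pose proof (st_cauchy_schwarz _ _ HI a b) as Hcs. unfold Cnorm2, proj in *.
  destruct (Nat.eqb_spec a s) as [->|Ha]; destruct (Nat.eqb_spec b s) as [->|Hb]; simpl.
  - pose proof (trace_split rho) as E. rewrite (st_trace _ _ HI) in E.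
    apply Cext; simpl; [lra | apply (st_diag_real _ _ HI)].
  - rewrite (Hp b Hb) in Hcs. apply Cext; simpl; nra.
  - rewrite (Hp a Ha) in Hcs. apply Cext; simpl; nra.
  - rewrite (Hp a Ha) in Hcs. apply Cext; simpl; nra.
Qed.

Lemma weighted_pop_le_leak rho (D : nat -> R) c : state d rho -> D s = 0 ->
  (forall n, (n < d)%nat -> n <> s -> D n <= - c) ->
  rsum d (fun n => Re (rho n n) * D n) <= - c * leak rho.
Proof.
  intros HI HDs HD. unfold leak. rewrite <- rsum_scal. apply rsum_le. intros n Hn.
  pose proof (st_pop_nonneg _ _ HI n).
  destruct (Nat.eqb_spec n s) as [->|Hne]; [rewrite HDs; lra|].
  pose proof (HD n Hn Hne). nra.
Qed.

Lemma Vf_ge_leak (f : nat -> R) rho : state d rho -> f s = 0 ->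
  (forall n, (n < d)%nat -> n <> s -> 1 <= f n) -> leak rho <= Vf d f rho.
Proof.
  intros HI Hf0 Hf1. rewrite Vf_eq. apply rsum_le. intros n Hn.
  pose proof (st_pop_nonneg _ _ HI n).
  destruct (Nat.eqb_spec n s) as [->|Hne]; [rewrite Hf0; lra|].
  pose proof (Hf1 n Hn Hne). nra.
Qed.

Lemma Vf_le_leak (f : nat -> R) rho : state d rho -> f s = 0 ->
  Vf d f rho <= rsum d (fun n => Rabs (f n)) * leak rho.
Proof.
  intros HI Hf0. rewrite Vf_eq, Rmult_comm, <- rsum_scal. apply rsum_le. intros n _.
  pose proof (st_pop_nonneg _ _ HI n). pose proof (Rabs_pos (f n)).
  destruct (Nat.eq_dec n s) as [->|Hne]; [rewrite Hf0, Rabs_R0; lra|].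
  pose proof (pop_le_leak rho n HI Hne). pose proof (Rle_abs (f n)). nra.
Qed.

End Leakage.

Lemma bounded_away (g : nat -> R) (s m : nat) :
  (forall n, (n < m)%nat -> n <> s -> g n < 0) ->
  exists c, 0 < c /\ forall n, (n < m)%nat -> n <> s -> g n <= - c.
Proof.
  induction m as [|m IH]; intros H.
  - exists 1. split; [lra | intros; lia].
  - destruct IH as [c [Hc Hc']]; [intros; apply H; lia|].
    destruct (Nat.eq_dec m s) as [->|Hms].
    + exists c. split; auto. intros n Hn Hns. apply Hc'; lia.
    + exists (Rmin c (- g m)). pose proof (H m ltac:(lia) Hms).
      split; [apply Rmin_pos; lra|]. intros n Hn Hns.
      pose proof (Rmin_l c (- g m)). pose proof (Rmin_r c (- g m)).
      destruct (Nat.eq_dec n m) as [->|Hnm]; [lra|].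
      pose proof (Hc' n ltac:(lia) Hns). lra.
Qed.

Lemma contraction_step V V' q F c : 0 <= q -> 0 < c -> 0 <= F ->
  V <= F * q -> V' <= V - c * q -> V' <= (1 - c / (F + c)) * V.
Proof.
  intros Hq Hc HF HV HV'.
  assert (V / (F + c) <= q).
  { apply Rmult_le_reg_r with (F + c); [lra|]. unfold Rdiv.
    rewrite Rmult_assoc, Rinv_l, Rmult_1_r by lra. nra. }
  replace ((1 - c / (F + c)) * V) with (V - c * (V / (F + c))) by (field; lra).
  nra.
Qed.

Lemma iterate_decay {X : Type} (T : X -> X) (P : X -> Prop) (V : X -> R) (r : R) :
  0 <= r -> (forall x, P x -> P (T x)) -> (forall x, P x -> V (T x) <= r * V x) ->
  forall x k, P x -> V (Nat.iter k T x) <= r ^ k * V x.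
Proof.
  intros Hr HP HV x k Hx. induction k as [|k IH]; simpl; [lra|].
  assert (Hk : P (Nat.iter k T x)) by (clear IH; induction k; simpl; auto).
  pose proof (HV _ Hk). pose proof (Rmult_le_compat_l r _ _ Hr IH). lra.
Qed.

Lemma geometric_cv (x : nat -> R) L r V0 : 0 <= r < 1 -> 0 <= V0 ->
  (forall k, (x k - L) ^ 2 <= r ^ k * V0) -> Un_cv x L.
Proof.
  intros Hr HV H eps Heps.
  assert (Hy : 0 < eps ^ 2 / (V0 + 1)) by (apply Rdiv_lt_0_compat; nra).
  destruct (pow_lt_1_zero r ltac:(rewrite Rabs_right; lra) _ Hy) as [N HN].
  exists N. intros k Hk. specialize (HN k Hk). specialize (H k).
  unfold R_dist. pose proof (pow_le r k (proj1 Hr)) as Hrk.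
  rewrite Rabs_right in HN by lra.
  assert (r ^ k * V0 < eps ^ 2).
  { apply (Rmult_lt_compat_r (V0 + 1)) in HN; [|lra].
    unfold Rdiv in HN. rewrite Rmult_assoc, Rinv_l, Rmult_1_r in HN by lra. nra. }
  rewrite <- (pow2_abs (x k - L)) in H. pose proof (Rabs_pos (x k - L)). nra.
Qed.

Lemma kraus_invariant nbar th2 phi :
  invariant_sub (dimD nbar) (Mg nbar th2) /\
  invariant_sub (dimD nbar) (Me nbar th2) /\
  invariant_sub (dimD nbar) (Mm nbar th2 phi).
Proof.
  split; [|split]; intros m n Hn Hm.
  - destruct (Nat.eq_dec n (pred m)) as [->|Hnm]; [|now apply Mg_off].
    replace m with (dimD nbar) by (rewrite dimD_S in *; lia).
    rewrite Mg_on, g_coef_top. reflexivity.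
  - apply Me_off. lia.
  - apply Mm_off. lia.
Qed.

Section Stabilization.
Variables (nbar : nat) (th2 phi eta : R) (f : nat -> R).
Hypothesis htheta2 : 0 < th2.
Hypothesis hres : forall (n k : nat), (1 <= n <= 4 * nbar + 3)%nat ->
  th2 <> INR k * PI / sqrt (INR n).
Hypothesis heta : 0 < eta < 1.
Hypothesis hf : f_spec nbar th2 eta f.

Local Notation d := (dimD nbar).
Local Notation Phi' := (Phi nbar th2 phi).

Lemma Vf_decrease : exists c, 0 < c /\ forall rho, state d rho ->
  Vf d f (Phi' rho) <= Vf d f rho - c * leak d nbar rho.
Proof.
  destruct (bounded_away (drift nbar th2 f) nbar d) as [c [Hc Hdrift]].
  { intros n Hn Hne. now apply (drift_neg nbar th2 eta). }
  exists c. split; auto. intros rho HI.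
  rewrite Vf_Phi by apply (st_supp _ _ HI).
  pose proof (weighted_pop_le_leak d nbar rho _ c HI (drift_at_nbar nbar th2 f) Hdrift).
  lra.
Qed.

Lemma Vf_contraction : exists r, 0 <= r < 1 /\ forall rho, state d rho ->
  Vf d f (Phi' rho) <= r * Vf d f rho.
Proof.
  destruct Vf_decrease as [c [Hc Hdec]].
  set (F := rsum d (fun n => Rabs (f n))).
  assert (HF : 0 <= F) by (apply rsum_nonneg; intros; apply Rabs_pos).
  exists (1 - c / (F + c)). split.
  - assert (0 < c / (F + c) <= 1).
    { split; [apply Rdiv_lt_0_compat; lra|].
      apply Rmult_le_reg_r with (F + c); [lra|]. unfold Rdiv.
      rewrite Rmult_assoc, Rinv_l by lra. lra. }
    lra.
  - intros rho HI. apply (contraction_step _ _ (leak d nbar rho) F c); auto.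
    + now apply leak_nonneg.
    + apply Vf_le_leak; auto. apply hf.
Qed.

Lemma leak_le_Vf rho : state d rho -> leak d nbar rho <= Vf d f rho.
Proof.
  intros HI. apply Vf_ge_leak; auto using nbar_lt_dim; [apply hf|].
  intros n Hn Hne. now apply (f_ge_one nbar th2 eta).
Qed.

Lemma iterates_converge rho0 i j : state d rho0 ->
  Un_cv (fun k => Re (Nat.iter k Phi' rho0 i j)) (Re (proj nbar i j)) /\
  Un_cv (fun k => Im (Nat.iter k Phi' rho0 i j)) (Im (proj nbar i j)).
Proof.
  intros H0. destruct Vf_contraction as [r [Hr Hcontr]].
  assert (Hstate : forall k, state d (Nat.iter k Phi' rho0))
    by (induction k; simpl; auto; now apply Phi_state).
  assert (Hleak : forall k, leak d nbar (Nat.iter k Phi' rho0) <= r ^ k * Vf d f rho0).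
  { intros k. apply Rle_trans with (Vf d f (Nat.iter k Phi' rho0)); [now apply leak_le_Vf|].
    apply (iterate_decay Phi' (state d) (Vf d f)); auto; [lra | apply Phi_state]. }
  assert (HV0 : 0 <= Vf d f rho0).
  { apply Rle_trans with (leak d nbar rho0); [now apply leak_nonneg | now apply leak_le_Vf]. }
  split; apply (geometric_cv _ _ r (Vf d f rho0)); auto; intros k;
    destruct (entry_bound d nbar (nbar_lt_dim nbar) (Nat.iter k Phi' rho0) i j (Hstate k));
    pose proof (Hleak k); lra.
Qed.

Lemma Vf_strict rho : state d rho -> rho <> proj nbar -> Vf d f (Phi' rho) < Vf d f rho.
Proof.
  intros HI Hne. destruct Vf_decrease as [c [Hc Hdec]].
  pose proof (Hdec rho HI). pose proof (leak_nonneg d nbar rho HI).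
  assert (leak d nbar rho <> 0)
    by (intros E; exact (Hne (no_leak_proj d nbar (nbar_lt_dim nbar) rho HI E))).
  nra.
Qed.

End Stabilization.

Theorem theorem1 (nbar : nat) (theta2 phi eta : R) (f : nat -> R)
  (hnbar : (1 <= nbar)%nat)
  (htheta2 : 0 < theta2)
  (hres : forall (n k : nat), (1 <= n <= 4 * nbar + 3)%nat ->
            theta2 <> INR k * PI / sqrt (INR n))
  (heta : 0 < eta < 1)
  (hf : f_spec nbar theta2 eta f) :
  (invariant_sub (dimD nbar) (Mg nbar theta2) /\
   invariant_sub (dimD nbar) (Me nbar theta2) /\
   invariant_sub (dimD nbar) (Mm nbar theta2 phi)) /\
  (forall rho0 : op, density (dimD nbar) rho0 ->
     forall i j : nat,
       Un_cv (fun k => Re (Nat.iter k (Phi nbar theta2 phi) rho0 i j)) (Re (proj nbar i j)) /\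
       Un_cv (fun k => Im (Nat.iter k (Phi nbar theta2 phi) rho0 i j)) (Im (proj nbar i j))) /\
  (forall rho : op, density (dimD nbar) rho -> rho <> proj nbar ->
     Vf (dimD nbar) f (Phi nbar theta2 phi rho) < Vf (dimD nbar) f rho).
Proof.
  split; [|split].
  - apply kraus_invariant.
  - intros rho0 H0 i j. apply (iterates_converge nbar theta2 phi eta f); auto.
    now apply density_state.
  - intros rho H Hne. apply (Vf_strict nbar theta2 phi eta f); auto.
    now apply density_state.
Qed.
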